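(* Let $p_1,\dots,p_k\in\mathbb{K}[x_1,\dots,x_d]$ be pure difference binomials and let $L\subseteq\mathbb{Z}^d$ be the lattice spanned by their exponent vectors. There exists a linear loop with a diagonal update matrix $M\in\mathbb{Q}^{d\times d}$ (and initial vector in $\mathbb{Q}^d$) whose invariant ideal is $I_{\operatorname{Sat}(L)}$.
   Context: $\mathbb{K}=\overline{\mathbb{Q}}$. A pure difference binomial is $\bm{x}^{\bm{\alpha}}-\bm{x}^{\bm{\beta}}$ with $\bm{\alpha},\bm{\beta}\in\mathbb{N}^d$; its exponent vector is $\bm{\alpha}-\bm{\beta}$. $\operatorname{Sat}(L)=\{\bm{u}\in\mathbb{Z}^d : c\bm{u}\in L\text{ for some } c\in\mathbb{Z}\setminus\{0\}\}$; the lattice ideal of a lattice $L'$ is $I_{L'}=\langle \bm{x}^{\bm{\alpha}}-\bm{x}^{\bm{\beta}} : \bm{\alpha},\bm{\beta}\in\mathbb{N}^d,\ \bm{\alpha}-\bm{\beta}\in L'\rangle$. A linear loop with initial vector $\bm{s}$ and update matrix $M$ has orbit $M^n\bm{s}$, $n\ge0$; a polynomial $P\in\mathbb{K}[\bm{x}]$ is an invariant if $P(M^n\bm{s})=0$ for all $n\ge0$, and the invariant ideal is the ideal of all invariants. *)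

From HB Require Import structures.
From mathcomp Require Import all_boot all_order all_algebra all_field.
From mathcomp Require Import mpoly.
Set Implicit Arguments. Unset Strict Implicit. Unset Printing Implicit Defensive.
Import Order.TTheory GRing.Theory Num.Theory.
Local Open Scope ring_scope.

(* K = \overline{Q} is modelled by algC (the algebraic numbers). *)

Definition pdbinom (d : nat) (a b : 'X_{1..d}) : {mpoly algC[d]} :=
  'X_[a] - 'X_[b].

Definition expvec (d : nat) (a b : 'X_{1..d}) : 'rV[int]_d :=
  \row_j ((a j)%:Z - (b j)%:Z).

Definition span_lattice (d k : nat) (v : 'I_k -> 'rV[int]_d) : 'rV[int]_d -> Prop :=
  fun u => exists c : 'I_k -> int, u = \sum_(i < k) c i *: v i.

Definition Sat (d : nat) (L : 'rV[int]_d -> Prop) : 'rV[int]_d -> Prop :=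
  fun u => exists c : int, c != 0 /\ L (c *: u).

Definition ideal_gen (d : nat) (G : {mpoly algC[d]} -> Prop) : {mpoly algC[d]} -> Prop :=
  fun P => exists (s : seq ({mpoly algC[d]} * {mpoly algC[d]})),
     (forall q, q \in s -> G q.2) /\ P = \sum_(q <- s) q.1 * q.2.

Definition lattice_ideal (d : nat) (L' : 'rV[int]_d -> Prop) : {mpoly algC[d]} -> Prop :=
  ideal_gen (fun P => exists a b : 'X_{1..d}, L' (expvec a b) /\ P = pdbinom a b).

Definition orbit (d : nat) (M : 'M[rat]_d) (s : 'cV[rat]_d) (n : nat) : 'cV[rat]_d :=
  iter n (mulmx M) s.

Definition invariant_ideal (d : nat) (M : 'M[rat]_d) (s : 'cV[rat]_d) :
  {mpoly algC[d]} -> Prop :=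
  fun P => forall n : nat, P.@[fun j => ratr (orbit M s n j 0)] = 0.

(* Take the loop [M = diag(λ_1, ..., λ_d)], [s = (1, ..., 1)], so that the orbit is
   [n ↦ (λ_1^n, ..., λ_d^n)] and a monomial [x^m] evaluates to [λ^m ^ n] along it.
   A polynomial vanishing on all these points has, for each value [z], coefficients
   summing to 0 over the monomials with [λ^m = z] (Vandermonde), hence lies in the
   ideal of the binomials [x^a - x^b] with [λ^a = λ^b].  Choosing an integer matrix
   [A] whose left kernel is the rational span of [L] and [λ_j = ∏_l p_l ^ A_jl] for
   distinct primes [p_l], unique factorisation gives [λ^a = λ^b] iff [(a - b) A = 0]
   iff [a - b ∈ Sat(L)]. *)
From Pilot Require Import Defs.
From HB Require Import structures.
From mathcomp Require Import all_boot all_order all_algebra all_field.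
From mathcomp Require Import mpoly zify ring.
Set Implicit Arguments. Unset Strict Implicit. Unset Printing Implicit Defensive.
Import Order.TTheory GRing.Theory Num.Theory.
Local Open Scope ring_scope.

Lemma partition_big_undup (I J : eqType) (R : nmodType) (s : seq I)
    (f : I -> J) (F : I -> R) :
  \sum_(i <- s) F i = \sum_(j <- undup (map f s)) \sum_(i <- s | f i == j) F i.
Proof.
under [RHS]eq_bigr do rewrite big_mkcond.
rewrite exchange_big /=; apply: eq_big_seq => i si.
rewrite -big_mkcond /= (eq_bigl (pred1 (f i))); last by move=> j; rewrite /= eq_sym.
by rewrite -big_filter filter_pred1_uniq ?undup_uniq ?big_seq1 // mem_undup map_f.
Qed.

Lemma power_sums_eq0_fibers (I : eqType) (R : idomainType) (s : seq I)
    (c mu : I -> R) :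
  (forall n, \sum_(i <- s) c i * mu i ^+ n = 0) ->
  forall z, \sum_(i <- s | mu i == z) c i = 0.
Proof.
move=> sum_pow0 z.
have sum_poly0 (q : {poly R}) : \sum_(i <- s) c i * q.[mu i] = 0.
  under eq_bigr do rewrite horner_coef big_distrr /=.
  rewrite exchange_big /= big1 // => k _.
  by under eq_bigr do rewrite mulrCA; rewrite -big_distrr /= sum_pow0 mulr0.
pose q := \prod_(y <- map mu s | y != z) ('X - y%:P).
have qE x : q.[x] = \prod_(y <- map mu s | y != z) (x - y).
  by rewrite horner_prod; apply: eq_bigr => y _; rewrite hornerXsubC.
have qz_neq0 : q.[z] != 0.
  rewrite qE prodf_seq_neq0; apply/allP => y _.
  by apply/implyP; rewrite subr_eq0 eq_sym.
have q_off_z i : i \in s -> mu i != z -> q.[mu i] = 0.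
  move=> si miz; apply/eqP; rewrite qE prodf_seq_eq0; apply/hasP.
  by exists (mu i); rewrite ?map_f // miz subrr eqxx.
have := sum_poly0 q; rewrite (bigID (fun i => mu i == z)) /=.
rewrite [X in _ + X]big1_seq ?addr0; last first.
  by move=> i /andP[miz si]; rewrite q_off_z ?mulr0.
under eq_bigr => i /eqP -> do rewrite mulrC.
by rewrite -big_distrr /= => /eqP; rewrite mulf_eq0 (negPf qz_neq0) => /eqP.
Qed.

Lemma ideal_gen_mono (d : nat) (G G' : {mpoly algC[d]} -> Prop) (P : {mpoly algC[d]}) :
  (forall Q, G Q -> G' Q) -> ideal_gen G P -> ideal_gen G' P.
Proof. by move=> GG' [s [Gs ->]]; exists s; split => // q /Gs /GG'. Qed.

Section VanishingOnPowers.
Variables (d : nat) (w : 'I_d -> algC).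

Definition mweight (m : 'X_{1..d}) : algC := \prod_j w j ^+ m j.

Definition equal_weight_binomial (Q : {mpoly algC[d]}) : Prop :=
  exists a b, mweight a = mweight b /\ Q = pdbinom a b.

Lemma meval_mpolyX_powers (m : 'X_{1..d}) n :
  ('X_[m] : {mpoly algC[d]}).@[fun j => w j ^+ n] = mweight m ^+ n.
Proof. by rewrite mevalX -prodrXl; apply: eq_bigr => j _; rewrite exprAC. Qed.

Lemma meval_powers (P : {mpoly algC[d]}) n :
  P.@[fun j => w j ^+ n] = \sum_(m <- msupp P) P@_m * mweight m ^+ n.
Proof. by rewrite mevalE; apply: eq_bigr => m _; rewrite -mevalX meval_mpolyX_powers. Qed.

Lemma vanishing_powers_binomialP (P : {mpoly algC[d]}) :
  (forall n, P.@[fun j => w j ^+ n] = 0) <-> ideal_gen equal_weight_binomial P.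
Proof.
split=> [P0 | [s [Gs ->]] k]; last first.
  rewrite raddf_sum /= big1_seq // => q /andP[_ /Gs [a [b [ab ->]]]].
  by rewrite mevalM mevalB !meval_mpolyX_powers ab subrr mulr0.
set S := msupp P.
have fiber0 z : \sum_(m <- S | mweight m == z) P@_m = 0.
  by apply: (@power_sums_eq0_fibers _ _ S _ mweight) => n; rewrite -meval_powers.
pose rep z := nth 0%MM S (find (fun m => mweight m == z) S).
have rep_weight m : m \in S -> mweight (rep (mweight m)) = mweight m.
  move=> Sm; apply/eqP/(@nth_find _ _ (fun m' => mweight m' == mweight m)).
  by apply/hasP; exists m.
(* [P = Σ_m P@_m (x^m - x^(rep m))], because the [P@_m] sum to 0 on each weight class. *)
exists [seq ((P@_m)%:MP, pdbinom m (rep (mweight m))) | m <- S]; split.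
  by move=> q /mapP [m Sm ->]; exists m, (rep (mweight m)); rewrite rep_weight.
rewrite big_map {1}(mpolyE P) -/S.
under [RHS]eq_bigr do rewrite /pdbinom /= mul_mpolyC scalerBr.
rewrite sumrB; suff -> : \sum_(m <- S) P@_m *: 'X_[rep (mweight m)] = 0.
  by rewrite subr0.
rewrite (partition_big_undup _ mweight) big1 // => z _.
rewrite (eq_bigr (fun m => P@_m *: 'X_[rep z])) => [|m /eqP -> //].
by rewrite -scaler_suml fiber0 scale0r.
Qed.

End VanishingOnPowers.

Lemma common_denominator (I : finType) (x : I -> rat) :
  exists2 D : int, D != 0 & forall i, exists z : int, z%:~R = D%:~R * x i.
Proof.
exists (\prod_i denq (x i)).
  by rewrite prodf_seq_neq0; apply/allP => i _; rewrite denq_neq0.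
move=> i; exists (numq (x i) * \prod_(j | j != i) denq (x j)).
by rewrite [in RHS](bigD1 i) //= !intrM numqE; ring.
Qed.

Lemma map_mx_intr_eq0 (m n : nat) (B : 'M[int]_(m, n)) :
  (map_mx intr B == 0 :> 'M[rat]_(m, n)) = (B == 0).
Proof.
apply/eqP/eqP => [/matrixP B0 | ->]; last exact: map_mx0.
by apply/matrixP => i j; have /eqP := B0 i j; rewrite !mxE intr_eq0 => /eqP.
Qed.

Section SaturationKernel.
Variables (d k : nat) (v : 'I_k -> 'rV[int]_d).

Definition lattice_mx : 'M[rat]_(k, d) := \matrix_(i, j) (v i 0 j)%:~R.

Lemma Sat_span_lattice_submx (u : 'rV[int]_d) :
  Sat (span_lattice v) u <-> (map_mx intr u <= lattice_mx)%MS.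
Proof.
split=> [[c [c0 [w cuE]]] | /submxP [W uE]].
  apply/submxP; exists (\row_i ((w i)%:~R / c%:~R)); apply/rowP => j.
  have := congr1 (fun B : 'rV[int]_d => (B 0 j)%:~R : rat) cuE.
  rewrite !mxE summxE rmorph_sum /= intrM => cujE.
  have cq0 : (c%:~R : rat) != 0 by rewrite intr_eq0.
  apply: (mulfI cq0); rewrite cujE mulr_sumr; apply: eq_bigr => i _.
  by rewrite !mxE intrM; field.
have [D D0 /fin_all_exists [z zE]] := common_denominator (fun i => W 0 i).
exists D; split => //; exists z; apply/rowP => j; apply: (@intr_inj rat).
have := congr1 (fun B : 'rV[rat]_d => B 0 j) uE; rewrite !mxE => ujE.
rewrite intrM ujE summxE rmorph_sum /= mulr_sumr; apply: eq_bigr => i _.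
by rewrite !mxE intrM zE mulrA.
Qed.

Lemma Sat_span_lattice_kernel :
  exists A : 'M[int]_d, forall u, Sat (span_lattice v) u <-> u *m A = 0.
Proof.
pose C := cokermx lattice_mx.
have [D D0 /fin_all_exists [Af AfE]] :=
  common_denominator (fun jl : 'I_d * 'I_d => C jl.1 jl.2).
pose A := \matrix_(j, l) Af (j, l).
have AE : map_mx intr A = D%:~R *: C.
  by apply/matrixP => j l; move: (AfE (j, l)); rewrite !mxE.
exists A => u; rewrite Sat_span_lattice_submx submxE.
have AuE : (u *m A == 0) = (map_mx intr u *m C == 0).
  by rewrite -map_mx_intr_eq0 map_mxM AE -scalemxAr scaler_eq0 intr_eq0 (negPf D0).
by rewrite -AuE; split=> /eqP.
Qed.

End SaturationKernel.

Section DistinctPrimes.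
Variables (d : nat) (p : 'I_d -> nat).
Hypotheses (p_prime : forall l, prime (p l)) (p_inj : injective p).

Lemma logn_prod_primes (e : 'I_d -> nat) (l : 'I_d) :
  logn (p l) (\prod_(l' < d) p l' ^ e l') = e l.
Proof.
have [_ ->] : (0 < \prod_(l' < d) p l' ^ e l')%N /\
    logn (p l) (\prod_(l' < d) p l' ^ e l') = \sum_(l' < d) (e l' * (l == l'))%N.
  apply: (big_ind2 (fun x y => 0 < x /\ logn (p l) x = y)%N).
  - by rewrite logn1.
  - by move=> x1 x2 y1 y2 [x1_gt0 <-] [x2_gt0 <-]; rewrite muln_gt0 x1_gt0 lognM.
  - move=> l' _; rewrite expn_gt0 prime_gt0 // lognX logn_prime //.
    by rewrite (inj_eq p_inj).
rewrite (bigD1 l) //= eqxx muln1 big1 => [|l' /negbTE l'l]; first exact: addn0.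
by rewrite eq_sym l'l muln0.
Qed.

Lemma prod_primes_exprz_inj (x y : 'I_d -> int) :
  \prod_(l < d) ((p l)%:R : rat) ^ x l = \prod_(l < d) ((p l)%:R : rat) ^ y l ->
  x =1 y.
Proof.
move=> xy.
pose N := \sum_(l < d) (`|x l| + `|y l|)%N.
have le_N l : (`|x l| + `|y l| <= N)%N by rewrite /N (bigD1 l) //= leq_addr.
have xN l : (`|x l| <= N)%N by have := le_N l; lia.
have yN l : (`|y l| <= N)%N by have := le_N l; lia.
(* Shifting all exponents by [N] makes them natural numbers. *)
pose e (z : 'I_d -> int) l := absz (z l + N%:Z).
have eE (z : 'I_d -> int) l : (`|z l| <= N)%N -> (e z l)%:Z = z l + N%:Z.
  by move=> zN; rewrite /e gez0_abs //; lia.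
have p_unit l : ((p l)%:R : rat) \is a GRing.unit.
  by rewrite unitfE pnatr_eq0 -lt0n prime_gt0.
have prod_shift (z : 'I_d -> int) : (forall l, `|z l| <= N)%N ->
    ((\prod_(l < d) p l ^ e z l)%N%:R : rat) =
    \prod_(l < d) ((p l)%:R : rat) ^ z l * \prod_(l < d) ((p l)%:R : rat) ^ N%:Z.
  move=> zN; rewrite natr_prod -big_split /=; apply: eq_bigr => l _.
  by rewrite natrX -exprzDr // -eE.
have eq_shift : (\prod_(l < d) p l ^ e x l = \prod_(l < d) p l ^ e y l)%N.
  by apply/eqP; rewrite -(eqr_nat rat) !prod_shift ?xy.
move=> l; have := logn_prod_primes (e x) l; rewrite eq_shift logn_prod_primes.
by move/(congr1 Posz); rewrite !eE // => /addIr.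
Qed.

End DistinctPrimes.

Fixpoint prime_seq (n : nat) : nat :=
  if n is n'.+1 then sval (prime_above (prime_seq n')) else 2.

Lemma prime_seq_prime n : prime (prime_seq n).
Proof. by case: n => [|n] //=; case: prime_above. Qed.

Lemma prime_seq_inj : injective prime_seq.
Proof.
apply: incn_inj; apply: leq_mono; apply: homo_ltn; first exact: ltn_trans.
by move=> n /=; case: prime_above.
Qed.

Definition multinom_row (d : nat) (m : 'X_{1..d}) : 'rV[int]_d := \row_j (m j)%:Z.

Lemma expvecE (d : nat) (a b : 'X_{1..d}) :
  expvec a b = multinom_row a - multinom_row b.
Proof. by apply/rowP => j; rewrite !mxE. Qed.

Section PrimePowerWeights.
Variables (d : nat) (A : 'M[int]_d).

Let p (l : 'I_d) : rat := (prime_seq l)%:R.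

Definition prime_power_row (j : 'I_d) : rat := \prod_(l < d) p l ^ A j l.

Lemma prod_prime_power_rowE (m : 'X_{1..d}) :
  \prod_(j < d) prime_power_row j ^+ m j =
  \prod_(l < d) p l ^ (multinom_row m *m A) 0 l.
Proof.
have p_unit l : p l \is a GRing.unit.
  by rewrite unitfE pnatr_eq0 -lt0n prime_gt0 ?prime_seq_prime.
under eq_bigr do rewrite -prodrXl.
rewrite exchange_big /=; apply: eq_bigr => l _; rewrite !mxE.
rewrite (big_morph (fun e : int => p l ^ e) (exprzDr (p_unit l)) (expr0z (p l))).
by apply: eq_bigr => j _; rewrite !mxE exprnP exprz_exp mulrC.
Qed.

Lemma prod_prime_power_row_eq (a b : 'X_{1..d}) :
  \prod_(j < d) prime_power_row j ^+ a j = \prod_(j < d) prime_power_row j ^+ b j <->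
  expvec a b *m A = 0.
Proof.
rewrite !prod_prime_power_rowE expvecE mulmxBl; split => [ab | /eqP].
  apply/eqP; rewrite subr_eq0; apply/eqP/rowP => l.
  have p_inj : injective (fun l : 'I_d => prime_seq l).
    by move=> l1 l2 /prime_seq_inj /val_inj.
  exact: (prod_primes_exprz_inj (fun l => prime_seq_prime l) p_inj ab l).
by rewrite subr_eq0 => /eqP ->.
Qed.

End PrimePowerWeights.

Lemma orbit_diag_mx (d : nat) (lam : 'rV[rat]_d) (s : 'cV[rat]_d) n j :
  Defs.orbit (diag_mx lam) s n j 0 = lam 0 j ^+ n * s j 0.
Proof.
elim: n => [|n IHn]; first by rewrite mul1r.
by rewrite /Defs.orbit iterS -/(Defs.orbit _ _ n) mul_diag_mx mxE IHn exprS mulrA.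
Qed.

Lemma invariant_ideal_diag_ones (d : nat) (lam : 'I_d -> rat) (P : {mpoly algC[d]}) :
  invariant_ideal (diag_mx (\row_j lam j)) (const_mx 1) P <->
  (forall n, P.@[fun j => ratr (lam j) ^+ n] = 0).
Proof.
suff orbitE n :
    P.@[fun j => ratr (Defs.orbit (diag_mx (\row_j lam j)) (const_mx 1) n j 0)] =
    P.@[fun j => ratr (lam j) ^+ n].
  by split=> P0 n; rewrite ?orbitE // -orbitE.
by apply: meval_eq => j; rewrite orbit_diag_mx !mxE mulr1 rmorphXn.
Qed.

Theorem theorem3p7 (d k : nat) (a b : 'I_k -> 'X_{1..d}) :
  exists (M : 'M[rat]_d) (s : 'cV[rat]_d),
    is_diag_mx M /\
    (forall P : {mpoly algC[d]},
       invariant_ideal M s P <->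
       lattice_ideal (Sat (span_lattice (fun i => expvec (a i) (b i)))) P).
Proof.
have [A SatE] := Sat_span_lattice_kernel (fun i => expvec (a i) (b i)).
exists (diag_mx (\row_j prime_power_row A j)), (const_mx 1).
split=> [|P]; first exact: diag_mx_is_diag.
apply: iff_trans (invariant_ideal_diag_ones (prime_power_row A) P) _.
apply: iff_trans (vanishing_powers_binomialP _ P) _.
have weightE m : mweight (fun j => ratr (prime_power_row A j)) m =
                 ratr (\prod_j prime_power_row A j ^+ m j).
  by rewrite rmorph_prod; apply: eq_bigr => j _; rewrite rmorphXn.
split; apply: ideal_gen_mono => _ [x [y [xy ->]]]; exists x, y; split => //.
- apply/SatE/prod_prime_power_row_eq; apply: (fmorph_inj (@ratr algC)).
  by move: xy; rewrite !weightE.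
- by rewrite !weightE; congr ratr; apply/prod_prime_power_row_eq/SatE.
Qed.
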